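(* Let $\mathcal G$ be a constructor GRS over a finite signature $\mathcal F$ that is precedence terminating with argument separation, and let $d\in\mathbb N$ with $d\ge\max\big(\{\mathrm{ar}(f):f\in\mathcal F\}\cup\{|K{\restriction}r|:(K,l,r)\in\mathcal G_{\mathrm{fin}}\}\big)$. Suppose every rule $(K,l,r)\in\mathcal G_{\mathrm{inf}}$ satisfies conditions (i)–(iv) below. Then for every closed basic term graph $G_0\in\mathcal{TG}(\mathcal F)$ and every $n\in\mathbb N$, if $G_0\to^n_{\mathcal G}G$ then $|G|\le|G_0|+n\cdot\big(\big|\bigcup_{v\in\mathrm{nrm}(\rho_{G_0})}V_{G_0\restriction v}\big|+2d\big)$. Conditions: (i) $(K{\restriction}l)\cap\mathrm{nrm}$ is maximally shared; (ii) $K{\restriction}v$ is closed for every labeled node $v\in\mathrm{nrm}(l)$; (iii) $\big|\{v\in\mathrm{nrm}(l):v\text{ unlabeled}\}\cup\bigcup_{v\in\mathrm{safe}(l)}V_{K\restriction v}\big|\le d$; (iv) $|K{\restriction}r|\le|K{\restriction}l|+\big|\bigcup_{v\in\mathrm{nrm}(r)}V_{K\restriction v}\big|$.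
   Context: Term graphs. $\mathcal F=\mathcal C\cup\mathcal D$ is a finite signature (constructors and defined symbols, disjoint) with arity function $\mathrm{ar}$. A labeled graph consists of a finite acyclic directed graph $(V_G,E_G)$, a partial labeling $\mathrm{lab}_G:V_G\to\mathcal F$ and a successor function $\mathrm{att}_G:V_G\to V_G^*$ such that $\mathrm{att}_G(v)$ has length $\mathrm{ar}(\mathrm{lab}_G(v))$ if $v$ is labeled and is empty otherwise, and the set of entries of $\mathrm{att}_G(v)$ equals $\{u:(v,u)\in E_G\}$. Unlabeled nodes act as variables. A term graph additionally has a root $\rho_G$ from which every node is reachable; $\mathcal{TG}(\mathcal F)$ is the set of term graphs over $\mathcal F$, $\mathcal{TG}(\mathcal C)$ those whose labeled nodes carry constructors. $G{\restriction}v$ is the sub-term graph of nodes reachable from $v$, rooted at $v$; $H\subseteq G$ means $H=G{\restriction}v$ for some $v$. $|G|=|V_G|$. $G$ is closed if every node is labeled; basic if $\mathrm{lab}_G(\rho_G)\in\mathcal D$ and $G{\restriction}v\in\mathcal{TG}(\mathcal C)$ for every successor $v$ of $\rho_G$. Choosing an injective map from unlabeled nodes to variables, each $G{\restriction}v$ has a term representation $\mathrm{term}(G{\restriction}v)$; $G$ is maximally shared if $\mathrm{term}(G{\restriction}u)=\mathrm{term}(G{\restriction}v)$ implies $u=v$. Argument separation. The argument positions of each $f\in\mathcal F$ are split into normal and safe ones; constructors have only safe positions; nodes with the same label have the same separation. $\mathrm{nrm}(v)$ (resp. $\mathrm{safe}(v)$) is the set of successors of $v$ at normal (resp. safe) positions.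 $H\sqsubset_{\mathrm{nrm}}G$ means $H\subseteq G{\restriction}v$ for some $v\in\mathrm{nrm}(\rho_G)$. For $G$ with $\mathrm{att}_G(\rho_G)=v_1,\dots,v_k;v_{k+1},\dots,v_{k+l}$, $G\cap\mathrm{nrm}$ is the term graph with root $\rho_G$ whose nodes are $\rho_G$, the nodes of $G{\restriction}v$ for $v\in\mathrm{nrm}(\rho_G)$ (with labels and successors from $G$), and $l$ fresh unlabeled nodes $u_1,\dots,u_l$, with $\mathrm{att}(\rho_G)=v_1,\dots,v_k;u_1,\dots,u_l$ (if no safe successor of the root is labeled, $G\cap\mathrm{nrm}=G$). Rewriting. Homomorphisms of labeled graphs preserve labels, successor sequences at labeled nodes (nothing required at unlabeled nodes) and the normal/safe split. A graph rewrite rule $(K,l,r)$ is a labeled graph $K$ with distinct nodes $l,r$ such that every unlabeled node of $K{\restriction}r$ lies in $K{\restriction}l$; it is a constructor rule if $K{\restriction}l$ is basic. A GRS is a (possibly infinite) set of rules; a constructor GRS consists of constructor rules. For a rule $(K,l,r)$ and homomorphism $\varphi:K{\restriction}l\to G$, the step $G\to_{\mathcal G}H$ is the standard build/redirection/garbage-collection step replacing $G{\restriction}\varphi(l)$ by an instance of $K{\restriction}r$ (new labeled nodes are fresh copies, unlabeled nodes are mapped via $\varphi$, edges into $\varphi(l)$ are redirected to the image of $r$, unreachable nodes removed). $\to^n_{\mathcal G}$ is the $n$-fold iteration. $\mathcal D_{\mathrm{inf}}$ is the set of defined symbols labeling the left root of infinitely many rules of $\mathcal G$, $\mathcal D_{\mathrm{fin}}=\mathcal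 D\setminus\mathcal D_{\mathrm{inf}}$; $\mathcal G_{\mathrm{inf}}=\{(K,l,r)\in\mathcal G:\mathrm{lab}_K(l)\in\mathcal D_{\mathrm{inf}}\}$, $\mathcal G_{\mathrm{fin}}=\mathcal G\setminus\mathcal G_{\mathrm{inf}}$. Precedence termination with argument separation. A precedence $\sqsubset$ is a well-founded strict partial order on $\mathcal F$ with all constructors minimal. $H\sqsubset_{\mathrm{pt}}G$ holds if $\mathrm{lab}_H(v)\sqsubset\mathrm{lab}_G(\rho_G)$ for every labeled node $v$ of $H$ and either (1) $H=G{\restriction}u$ or $H\sqsubset_{\mathrm{pt}}G{\restriction}u$ for some successor $u$ of $\rho_G$; or (2) $\rho_H$ is labeled, $H{\restriction}v\sqsubset_{\mathrm{nrm}}G$ for each $v\in\mathrm{nrm}(\rho_H)$, and $H{\restriction}v\sqsubset_{\mathrm{pt}}G$ for each $v\in\mathrm{safe}(\rho_H)$. $\mathcal G$ is precedence terminating with argument separation if for some separation and precedence, $K{\restriction}r\sqsubset_{\mathrm{pt}}K{\restriction}l$ for every rule. *)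

From mathcomp Require Import all_boot.
Set Implicit Arguments.
Unset Strict Implicit.
Unset Printing Implicit Defensive.

Section TermGraphs.

(* Argument separation: the first
   nn f argument positions of f are normal, the remaining ones are safe. *)
Variable F : finType.
Variable ar : F -> nat.
Variable isC : pred F.
Variable nn : F -> nat.

(* A labeled graph is a finite list of entries (node, (label, successors));
   nodes are natural numbers; unlabeled nodes (label None) act as variables. *)
Definition entry := (nat * (option F * seq nat))%type.
Definition lgraph := seq entry.

Definition nodes (G : lgraph) : seq nat := map fst G.
Definition entry_of (G : lgraph) (v : nat) : entry :=
  nth (v, (None, [::])) G (find (fun e : entry => e.1 == v) G).
Definition lab (G : lgraph) (v : nat) : option F := (entry_of G v).2.1.
Definition att (G : lgraph) (v : nat) : seq nat := (entry_of G v).2.2.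

Inductive tc (G : lgraph) : nat -> nat -> Prop :=
| tc1 v w : w \in att G v -> tc G v w
| tcS v u w : u \in att G v -> tc G u w -> tc G v w.

Definition arity_of (o : option F) : nat :=
  if o is Some f then ar f else 0.

Definition lgraph_wf (G : lgraph) : Prop :=
  [/\ uniq (nodes G),
      (forall v, v \in nodes G -> {subset att G v <= nodes G}),
      (forall v, v \in nodes G -> size (att G v) = arity_of (lab G v)) &
      (forall v, ~ tc G v v)].

(* Reachability (reflexive): explores all paths of length <= |G|+1, which
   covers every simple path, hence is exact reachability. *)
Fixpoint rch (G : lgraph) (n : nat) (v : nat) : seq nat :=
  if n is n'.+1 then v :: flatten [seq rch G n' w | w <- att G v] else [:: v].
Definition reachb (G : lgraph) (v w : nat) : bool := w \in rch G (size G).+1 v.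

Definition Vsub (G : lgraph) (v : nat) : seq nat :=
  [seq u <- nodes G | reachb G v u].

Record tgraph := TG { tg : lgraph; rootg : nat }.

Definition is_tg (T : tgraph) : Prop :=
  [/\ lgraph_wf (tg T), rootg T \in nodes (tg T) &
      forall u, u \in nodes (tg T) -> reachb (tg T) (rootg T) u].

Definition size_tg (T : tgraph) : nat := size (nodes (tg T)).

Definition subg (G : lgraph) (v : nat) : tgraph :=
  TG [seq e <- G | reachb G v e.1] v.
Definition subt (T : tgraph) (v : nat) : tgraph := subg (tg T) v.

Definition tg_eq (H G : tgraph) : Prop :=
  [/\ rootg H = rootg G, perm_eq (nodes (tg H)) (nodes (tg G)) &
      forall v, v \in nodes (tg H) ->
        lab (tg H) v = lab (tg G) v /\ att (tg H) v = att (tg G) v].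

Definition nrmv (G : lgraph) (v : nat) : seq nat :=
  if lab G v is Some f then take (nn f) (att G v) else [::].
Definition safev (G : lgraph) (v : nat) : seq nat :=
  if lab G v is Some f then drop (nn f) (att G v) else [::].

Definition closed_tg (T : tgraph) : Prop :=
  forall v, v \in nodes (tg T) -> lab (tg T) v != None.

Definition constr_tg (T : tgraph) : Prop :=
  forall v f, v \in nodes (tg T) -> lab (tg T) v = Some f -> isC f.

Definition basic (T : tgraph) : Prop :=
  (exists f, lab (tg T) (rootg T) = Some f /\ ~~ isC f) /\
  forall v, v \in att (tg T) (rootg T) -> constr_tg (subt T v).

Inductive term := Var of nat | App of F & list term.

Fixpoint toterm (G : lgraph) (n : nat) (v : nat) : term :=
  if n is n'.+1 then
    if lab G v is Some f then App f [seq toterm G n' w | w <- att G v]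
    else Var v
  else Var v.
Definition term_of (T : tgraph) (v : nat) : term :=
  toterm (tg (subt T v)) (size (tg T)).+1 v.

Definition max_shared (T : tgraph) : Prop :=
  forall u v, u \in nodes (tg T) -> v \in nodes (tg T) ->
    term_of T u = term_of T v -> u = v.

Definition cap_nrm (T : tgraph) : tgraph :=
  let G := tg T in let rho := rootg T in
  if lab G rho is Some f then
    let a := att G rho in let k := nn f in
    if has (fun v => lab G v != None) (drop k a) then
      let m := (foldr maxn 0 (nodes G)).+1 in
      let fresh := [seq m + i | i <- iota 0 (size a - k)] in
      let keep := [seq e <- G | has (fun v => reachb G v e.1) (take k a)
                                && (e.1 != rho)] in
      TG ((rho, (Some f, take k a ++ fresh)) :: keep
            ++ [seq (u, (None, [::])) | u <- fresh]) rho
    else T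
  else T.

Definition subtg (H G : tgraph) : Prop :=
  exists v, v \in nodes (tg G) /\ tg_eq H (subt G v).

Definition sqsub_nrm (H G : tgraph) : Prop :=
  exists v, v \in nrmv (tg G) (rootg G) /\ subtg H (subt G v).

Section Precedence.
Variable prec : rel F.

Definition below (H G : tgraph) : Prop :=
  forall v g, v \in nodes (tg H) -> lab (tg H) v = Some g ->
    exists f, lab (tg G) (rootg G) = Some f /\ prec g f.

Inductive pt : tgraph -> tgraph -> Prop :=
| pt_sub H G u : below H G -> u \in att (tg G) (rootg G) ->
    (tg_eq H (subt G u) \/ pt H (subt G u)) -> pt H G
| pt_comp H G f : below H G -> lab (tg H) (rootg H) = Some f ->
    (forall v, v \in nrmv (tg H) (rootg H) -> sqsub_nrm (subt H v) G) ->
    (forall v, v \in safev (tg H) (rootg H) -> pt (subt H v) G) -> pt H G.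

Definition precedence : Prop :=
  [/\ irreflexive prec, transitive prec, well_founded (fun a b => prec a b) &
      forall c g, isC c -> ~~ prec g c].
End Precedence.

Definition rule := (lgraph * nat * nat)%type.
Definition rK (R : rule) : lgraph := R.1.1.
Definition rl (R : rule) : nat := R.1.2.
Definition rr (R : rule) : nat := R.2.

Definition rule_wf (R : rule) : Prop :=
  [/\ lgraph_wf (rK R), rl R \in nodes (rK R), rr R \in nodes (rK R),
      rl R != rr R &
      forall u, u \in Vsub (rK R) (rr R) -> lab (rK R) u = None ->
        u \in Vsub (rK R) (rl R)].

Definition lhsg (R : rule) : tgraph := subg (rK R) (rl R).
Definition rhsg (R : rule) : tgraph := subg (rK R) (rr R).

Definition constructor_rule (R : rule) : Prop := basic (lhsg R).

Definition GRS := rule -> Prop.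

Definition D_inf (S : GRS) (f : F) : Prop :=
  ~ exists s : seq rule, forall R, S R -> lab (rK R) (rl R) = Some f -> R \in s.
Definition in_Ginf (S : GRS) (R : rule) : Prop :=
  exists f, lab (rK R) (rl R) = Some f /\ D_inf S f.

Definition homo (K : lgraph) (l : nat) (G : lgraph) (phi : nat -> nat) : Prop :=
  forall u, u \in Vsub K l ->
    phi u \in nodes G /\
    forall f, lab K u = Some f ->
      lab G (phi u) = Some f /\ att G (phi u) = map phi (att K u).

(* result of the rewrite step (build, redirection, garbage collection),
   with fresh names c u for the nodes of K|r not in K|l *)
Definition step_result (R : rule) (T : tgraph) (phi c : nat -> nat) : tgraph :=
  let K := rK R in let l := rl R in let r := rr R in let G := tg T in
  let img u := if u \in Vsub K l then phi u else c u in
  let new := [seq u <- Vsub K r | u \notin Vsub K l] in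
  let B := G ++ [seq (c u, (lab K u, map img (att K u))) | u <- new] in
  let redir w := if w == phi l then img r else w in
  let B' := [seq (e.1, (e.2.1, map redir e.2.2)) | e <- B] in
  subg B' (redir (rootg T)).

Definition fresh_ok (R : rule) (T : tgraph) (c : nat -> nat) : Prop :=
  let new := [seq u <- Vsub (rK R) (rr R) | u \notin Vsub (rK R) (rl R)] in
  {in new &, injective c} /\ forall u, u \in new -> c u \notin nodes (tg T).

Definition step (S : GRS) (T H : tgraph) : Prop :=
  exists R phi c, [/\ S R, homo (rK R) (rl R) (tg T) phi, fresh_ok R T c &
                      tg_eq H (step_result R T phi c)].

Fixpoint steps (S : GRS) (n : nat) (T H : tgraph) : Prop :=
  if n is n'.+1 then exists T', step S T T' /\ steps S n' T' H else H = T.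

Definition Vunion (G : lgraph) (vs : seq nat) : seq nat :=
  undup (flatten [seq Vsub G v | v <- vs]).

End TermGraphs.

From mathcomp Require Import all_boot.
From Stdlib Require Import Classical.
Set Implicit Arguments. Unset Strict Implicit. Unset Printing Implicit Defensive.

(* Along the reduction we maintain an invariant: below every normal argument
   the current graph coincides with the part of [G0] below the normal
   arguments of its root, a region [nrm0] of constructor nodes.  Precedence
   termination with argument separation places the normal arguments of every
   newly built node below normal arguments of the redex, and no redex lies in
   the constructor region, so the invariant survives each step.

   A step adds only the nodes of the right-hand side missing from the
   left-hand side.  For rules of G_fin there are at most d of them.  For rules
   of G_inf, condition (iv) bounds them by |K|l|, and K|l consists of l, at
   most d nodes counted in (iii), and labeled nodes below normal arguments of
   l.  By (i) and (ii) the matching maps the latter injectively into frozen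
   nodes, i.e. into [nrm0].  Hence each step adds at most |nrm0| + d + 1 nodes,
   which is at most |nrm0| + 2d unless d = 0, where every graph is a single
   node. *)

Section Graphs.
Variable F : finType.
Implicit Types (G M : lgraph F).

Lemma entry_of_notin G x : x \notin nodes G -> entry_of G x = (x, (None, [::])).
Proof.
move=> xG; rewrite /entry_of nth_default // leqNgt -has_find.
apply/negP => /hasP [e eG /eqP ex]; case/negP: xG; apply/mapP; by exists e.
Qed.

Lemma lab_notin G x : x \notin nodes G -> lab G x = None.
Proof. by move=> xG; rewrite /lab entry_of_notin. Qed.

Lemma att_notin G x : x \notin nodes G -> att G x = [::].
Proof. by move=> xG; rewrite /att entry_of_notin. Qed.

Lemma lab_node G x f : lab G x = Some f -> x \in nodes G.
Proof. by case: (boolP (x \in nodes G)) => // /lab_notin ->. Qed.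

Lemma att_node G x y : y \in att G x -> x \in nodes G.
Proof. by case: (boolP (x \in nodes G)) => // /att_notin ->. Qed.

Lemma entry_of_cons e G x :
  entry_of (e :: G) x = if e.1 == x then e else entry_of G x.
Proof. by rewrite /entry_of /=; case: ifP. Qed.

Lemma entry_of_cat G1 G2 x :
  entry_of (G1 ++ G2) x = if x \in nodes G1 then entry_of G1 x else entry_of G2 x.
Proof.
elim: G1 => [|e G1 IH] //=; rewrite !entry_of_cons in_cons eq_sym.
by case: eqP => //= _; rewrite IH.
Qed.

Lemma entry_of_filter (p : pred nat) G x : p x ->
  entry_of [seq e <- G | p e.1] x = entry_of G x.
Proof.
move=> px; elim: G => [|e G IH] //=; case: ifP => pe; rewrite !entry_of_cons IH //.
by case: eqP => // ex; rewrite ex px in pe.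
Qed.

Lemma entry_of_map (g : entry F -> entry F) G x :
  (forall e, (g e).1 = e.1) -> x \in nodes G ->
  entry_of (map g G) x = g (entry_of G x).
Proof.
move=> g1; elim: G => [|e G IH] //= xG; rewrite !entry_of_cons g1.
case: eqP => // ne; apply: IH; move: xG; rewrite in_cons.
by case/orP => // /eqP ex; case: ne.
Qed.

Lemma nodes_map (g : entry F -> entry F) G :
  (forall e, (g e).1 = e.1) -> nodes (map g G) = nodes G.
Proof. by move=> g1; rewrite /nodes -map_comp; apply: eq_map => e /=; rewrite g1. Qed.

Lemma nodes_filter (p : pred nat) G :
  nodes [seq e <- G | p e.1] = [seq u <- nodes G | p u].
Proof. by rewrite /nodes filter_map. Qed.

Lemma nodes_cat G1 G2 : nodes (G1 ++ G2) = nodes G1 ++ nodes G2.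
Proof. exact: map_cat. Qed.

Definition edge G : rel nat := fun x y => y \in att G x.
Definition reach G a z := exists p, path (edge G) a p /\ last a p = z.

Lemma mem_rch G n a z : z \in rch G n a <->
  exists p, [/\ path (edge G) a p, last a p = z & size p <= n].
Proof.
elim: n a => [|n IH] a /=.
  rewrite mem_seq1; split => [/eqP->|[[|x p] []]]; first by exists [::].
    by move=> _ <- _.
  by [].
rewrite in_cons; split.
  case/orP => [/eqP->|/flatten_mapP [x xa /IH [p [pp lp sp]]]]; first by exists [::].
  by exists (x :: p); split => //=; rewrite pp andbT.
case=> [[|x p]] [] /=; first by move=> _ ->; rewrite eqxx.
case/andP => xa pp lp sp; apply/orP; right; apply/flatten_mapP; exists x => //.
by apply/IH; exists p.
Qed.

Lemma path_belast_nodes G a p :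
  path (edge G) a p -> {subset belast a p <= nodes G}.
Proof.
elim: p a => [|x p IH] a //= /andP [ax pp] y; rewrite in_cons.
by case/orP => [/eqP->|]; [exact: att_node ax | exact: IH].
Qed.

(* [rch] explores paths of length at most [size G + 1], which suffices because
   removing loops from a path leaves a duplicate-free path through nodes of G. *)
Lemma reachbP G a z : reflect (reach G a z) (reachb G a z).
Proof.
apply: (iffP idP) => [/mem_rch [p [pp lp _]]|[p [pp lp]]]; first by exists p.
apply/mem_rch; case: (shortenP pp) lp => p' pp' up' _ lp'.
exists p'; split => //; apply: leqW.
rewrite -(size_belast a) -(size_map fst G) -/(nodes G).
apply: uniq_leq_size; last exact: path_belast_nodes pp'.
by move: up'; rewrite lastI rcons_uniq => /andP [].
Qed.

Lemma reach_refl G a : reach G a a.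
Proof. by exists [::]. Qed.

Lemma reach_trans G a b c : reach G a b -> reach G b c -> reach G a c.
Proof.
by case=> p [pp <-] [q [pq <-]]; exists (p ++ q); rewrite cat_path pp pq last_cat.
Qed.

Lemma reach_cons G a b c : b \in att G a -> reach G b c -> reach G a c.
Proof. by move=> ab [p [pp <-]]; exists (b :: p); rewrite /= pp andbT. Qed.

Lemma reach_edge G a b : b \in att G a -> reach G a b.
Proof. by move=> ab; apply: reach_cons ab (reach_refl _ _). Qed.

Lemma reach_split G a z :
  reach G a z -> z = a \/ exists2 x, x \in att G a & reach G x z.
Proof.
case=> [[|x p]] [] /=; first by left.
by case/andP => ax pp lp; right; exists x => //; exists p.
Qed.

Lemma reach_ind G (P : nat -> Prop) a :
  P a -> (forall x y, reach G a x -> P x -> y \in att G x -> P y) ->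
  forall z, reach G a z -> P z.
Proof.
move=> Pa PS z [p [pp <-]]; elim/last_ind: p pp => [|p y IH] //=.
rewrite -cats1 cat_path last_cat /= andbT => /andP [pp e].
by apply: (PS (last a p)) => //; [exists p | apply: IH].
Qed.

Lemma reach_nodes G a z :
  (forall x, x \in nodes G -> {subset att G x <= nodes G}) ->
  a \in nodes G -> reach G a z -> z \in nodes G.
Proof.
move=> Gcl aG; move: z; apply: reach_ind => // x y _ xG; exact: Gcl.
Qed.

Section Agree.
Variables (M G : lgraph F) (S : pred nat).
Hypothesis eq_att : forall x, x \in S -> att M x = att G x.
Hypothesis S_closed : forall x y, x \in S -> y \in att G x -> y \in S.

Lemma reach_agree a z : a \in S -> reach M a z -> reach G a z /\ z \in S.
Proof.
move=> aS; move: z; apply: (@reach_ind M (fun z => reach G a z /\ z \in S)).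
  by split=> //; apply: reach_refl.
move=> x y _ [ax xS]; rewrite eq_att // => yx.
by split; [apply: reach_trans ax (reach_edge yx) | exact: S_closed yx].
Qed.

Lemma path_agree a p : a \in S ->
  path (edge M) a p -> path (edge G) a p /\ all (mem S) p.
Proof.
elim: p a => [|x p IH] a aS //= /andP [ax pp].
have ax' : x \in att G a by rewrite -eq_att.
have xS := S_closed aS ax'.
by case: (IH x xS pp) => -> ->; rewrite /edge ax' xS.
Qed.

End Agree.

Lemma reach_agreeE M G (S : pred nat) a z :
  (forall x, x \in S -> att M x = att G x) ->
  (forall x y, x \in S -> y \in att G x -> y \in S) ->
  a \in S -> reach M a z <-> reach G a z.
Proof.
move=> eq_att S_closed aS; split => [/(reach_agree eq_att S_closed aS) []//|].
have eq_att' x : x \in S -> att G x = att M x by move=> xS; rewrite eq_att.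
have S_closed' x y : x \in S -> y \in att M x -> y \in S.
  by move=> xS; rewrite eq_att //; apply: S_closed.
by case/(reach_agree eq_att' S_closed' aS).
Qed.

Lemma reach_eq_att M G a z : (forall x, att M x = att G x) -> reach M a z -> reach G a z.
Proof.
by move=> eq_att /(@reach_agree M G predT (fun x _ => eq_att x) (fun _ _ _ _ => isT) a z isT) [].
Qed.

Lemma path_mem_reach G a p y : path (edge G) a p -> y \in a :: p -> reach G a y.
Proof.
elim: p a => [|x p IH] a /=; first by rewrite mem_seq1 => _ /eqP ->; apply: reach_refl.
case/andP => ax pp; rewrite in_cons; case/orP => [/eqP->|yp]; first exact: reach_refl.
by apply: reach_cons ax _; apply: IH.
Qed.

Lemma reach_tc G a x z : x \in att G a -> reach G x z -> tc G a z.
Proof.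
move=> + [p [+ <-]]; elim: p a x => [|y p IH] a x ax /=; first by move=> _; apply: tc1.
by case/andP => xy yp; apply: tcS ax _; apply: IH xy yp.
Qed.

Lemma acyclic_path_uniq G a p :
  (forall v, ~ tc G v v) -> path (edge G) a p -> uniq (a :: p).
Proof.
move=> acyc; elim: p a => [|x p IH] a //= /andP [ax pp].
have /= -> := IH x pp; rewrite andbT in_cons; apply/negP => ain; apply: (acyc a).
by apply: reach_tc ax _; apply: path_mem_reach pp _; rewrite in_cons.
Qed.

Lemma mem_Vsub G v z : (z \in Vsub G v) = (z \in nodes G) && reachb G v z.
Proof. by rewrite /Vsub mem_filter andbC. Qed.

Lemma Vsub_uniq G v : uniq (nodes G) -> uniq (Vsub G v).
Proof. exact: filter_uniq. Qed.

Lemma subg_entry G v x : reachb G v x -> entry_of (tg (subg G v)) x = entry_of G x.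
Proof. exact: entry_of_filter. Qed.

Lemma subg_lab G v x : reachb G v x -> lab (tg (subg G v)) x = lab G x.
Proof. by move=> vx; rewrite /lab subg_entry. Qed.

Lemma subg_att G v x : reachb G v x -> att (tg (subg G v)) x = att G x.
Proof. by move=> vx; rewrite /att subg_entry. Qed.

Lemma subg_nodes G v : nodes (tg (subg G v)) = Vsub G v.
Proof. exact: nodes_filter. Qed.

Lemma reach_subg G v a z : reach G v a -> (reach (tg (subg G v)) a z <-> reach G a z).
Proof.
move=> va; apply: (@reach_agreeE _ _ (reachb G v)); last exact/reachbP.
- by move=> x xS; rewrite subg_att.
- by move=> x y /reachbP vx yx; apply/reachbP; apply: reach_trans vx (reach_edge yx).
Qed.

Lemma tg_eq_fun (H S : tgraph F) : tg_eq H S ->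
  [/\ nodes (tg H) =i nodes (tg S), (forall x, lab (tg H) x = lab (tg S) x)
    & (forall x, att (tg H) x = att (tg S) x)].
Proof.
case=> _ /perm_mem eq_nodes eq_la; split => // x;
  case: (boolP (x \in nodes (tg H))) => xH; try by case: (eq_la x xH).
  by rewrite !lab_notin // -eq_nodes.
by rewrite !att_notin // -eq_nodes.
Qed.

Lemma map_eq_rel (T : Type) (f1 f2 : nat -> T) (ph : nat -> nat) s1 s2 :
  map ph s1 = map ph s2 ->
  (forall x1 x2, x1 \in s1 -> x2 \in s2 -> ph x1 = ph x2 -> f1 x1 = f2 x2) ->
  map f1 s1 = map f2 s2.
Proof.
elim: s1 s2 => [|x1 s1 IH] [|x2 s2] //= [e es] H.
rewrite (H x1 x2) ?mem_head // (IH s2) // => y1 y2 y1s y2s.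
by apply: H; rewrite in_cons ?y1s ?y2s orbT.
Qed.

(* Two nodes with the same image under [phi] unfold to the same term, so
   maximal sharing of [C] makes [phi] injective on [Lab]. *)
Section MaxShared.
Variables (K T : lgraph F) (phi : nat -> nat) (Lab : pred nat).
Hypothesis Lab_lab : forall z, z \in Lab -> lab K z != None.
Hypothesis phi_hom : forall z, z \in Lab ->
  lab T (phi z) = lab K z /\ att T (phi z) = map phi (att K z).
Hypothesis K_acyclic : forall v, ~ tc K v v.
Hypothesis Lab_closed : forall x y, x \in Lab -> y \in att K x -> y \in Lab.

Definition agrees_on_Lab M a := forall z, reach M a z ->
  [/\ z \in Lab, lab M z = lab K z & att M z = att K z].

Lemma toterm_hom k M1 M2 a1 a2 :
  agrees_on_Lab M1 a1 -> agrees_on_Lab M2 a2 ->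
  (forall p, path (edge M1) a1 p -> size p < k) ->
  (forall p, path (edge M2) a2 p -> size p < k) ->
  phi a1 = phi a2 -> toterm M1 k a1 = toterm M2 k a2.
Proof.
elim: k M1 M2 a1 a2 => [|k IH] M1 M2 a1 a2 H1 H2 P1 P2 e; first by have := P1 [::] isT.
have [a1L la1 aa1] := H1 a1 (reach_refl _ _).
have [a2L la2 aa2] := H2 a2 (reach_refl _ _).
have [lt1 at1] := phi_hom a1L; have [lt2 at2] := phi_hom a2L.
rewrite /= la1 la2 -lt1 -lt2 e.
case E: (lab T (phi a2)) => [f|]; last by move: (Lab_lab a1L); rewrite -lt1 e E.
congr App; rewrite aa1 aa2; apply: (@map_eq_rel _ _ _ phi); first by rewrite -at1 -at2 e.
move=> x1 x2 x1s x2s ex; apply: IH => //.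
- by move=> z r; apply: H1; apply: reach_cons r; rewrite aa1.
- by move=> z r; apply: H2; apply: reach_cons r; rewrite aa2.
- by move=> p pp; have := P1 (x1 :: p); rewrite /= /edge aa1 x1s pp; apply.
- by move=> p pp; have := P2 (x2 :: p); rewrite /= /edge aa2 x2s pp; apply.
Qed.

Variable C : tgraph F.
Hypothesis C_Lab : forall z, z \in Lab ->
  [/\ z \in nodes (tg C), lab (tg C) z = lab K z & att (tg C) z = att K z].

Let C_att x : x \in Lab -> att (tg C) x = att K x.
Proof. by case/C_Lab. Qed.

Lemma subt_agrees_on_Lab a : a \in Lab -> agrees_on_Lab (tg (subt C a)) a.
Proof.
move=> aL z r.
have az : reach (tg C) a z := (reach_subg z (reach_refl (tg C) a)).1 r.
have [_ zL] := reach_agree C_att Lab_closed aL az.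
have [_ lz az'] := C_Lab zL.
by rewrite /subt subg_lab ?subg_att //; apply/reachbP.
Qed.

Lemma subt_path_size a p : a \in Lab ->
  path (edge (tg (subt C a))) a p -> size p < (size (tg C)).+1.
Proof.
move=> aL pp.
have [pp1 _] := @path_agree _ _ (reachb (tg C) a)
  (fun x xS => subg_att xS)
  (fun x y xS yx => introT (reachbP _ _ _)
     (reach_trans (elimT (reachbP _ _ _) xS) (reach_edge yx)))
  a p (introT (reachbP _ _ _) (reach_refl _ _)) pp.
have [pp2 pL] := path_agree C_att Lab_closed aL pp1.
rewrite ltnS -(size_map fst) -/(nodes _) -ltnS -[(size p).+1]/(size (a :: p)).
apply: leqW; apply: uniq_leq_size; first exact: acyclic_path_uniq pp2.
move=> y; rewrite in_cons => /orP [/eqP->|/(allP pL) /C_Lab []//].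
by case: (C_Lab aL).
Qed.

Lemma max_shared_inj : max_shared C -> {in Lab &, injective phi}.
Proof.
move=> Cms u u' uL u'L e; have [uC _ _] := C_Lab uL; have [u'C _ _] := C_Lab u'L.
apply: Cms => //; apply: toterm_hom e; try exact: subt_agrees_on_Lab.
- by move=> p; apply: subt_path_size.
- by move=> p; apply: subt_path_size.
Qed.
End MaxShared.

End Graphs.

Section Rules.
Variables (F : finType) (ar : F -> nat) (isC : pred F) (nn : F -> nat).
Implicit Types (G M : lgraph F).

Lemma att_None G x : lgraph_wf ar G -> lab G x = None -> att G x = [::].
Proof.
case=> _ _ Gar _ lx; case: (boolP (x \in nodes G)) => [xG|/att_notin //].
by apply/eqP; rewrite -size_eq0 Gar // lx.
Qed.

Lemma mem_VsubP G v z : lgraph_wf ar G -> v \in nodes G ->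
  reflect (reach G v z) (z \in Vsub G v).
Proof.
case=> _ Gcl _ _ vG; rewrite mem_Vsub.
apply: (iffP andP) => [[_ /reachbP //]|vz].
by split; [exact: reach_nodes Gcl vG vz | apply/reachbP].
Qed.

Lemma nrmv_att G x : {subset nrmv nn G x <= att G x}.
Proof. by rewrite /nrmv; case: (lab G x) => // f y /mem_take. Qed.

Lemma safev_att G x : {subset safev nn G x <= att G x}.
Proof. by rewrite /safev; case: (lab G x) => // f y /mem_drop. Qed.

Lemma att_nrmv_safev G x f y : lab G x = Some f ->
  y \in att G x -> (y \in nrmv nn G x) || (y \in safev nn G x).
Proof. by rewrite /nrmv /safev => ->; rewrite -mem_cat cat_take_drop. Qed.

Lemma nrmv_ext G M x : lab G x = lab M x -> att G x = att M x ->
  nrmv nn G x = nrmv nn M x.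
Proof. by rewrite /nrmv => -> ->. Qed.

Lemma safev_ext G M x : lab G x = lab M x -> att G x = att M x ->
  safev nn G x = safev nn M x.
Proof. by rewrite /safev => -> ->. Qed.

Lemma cap_nrm_shape (T : tgraph F) f : lab (tg T) (rootg T) = Some f ->
  tg (cap_nrm nn T) = tg T \/ exists e rest, e.1 = rootg T /\
    tg (cap_nrm nn T) = e :: [seq x <- tg T | has (fun v => reachb (tg T) v x.1)
            (take (nn f) (att (tg T) (rootg T))) && (x.1 != rootg T)] ++ rest.
Proof.
case: T => G rho /= E; rewrite /cap_nrm /= E; case: ifP => _; last by left.
by right; do 2 eexists; split; last reflexivity.
Qed.

Variable prec : rel F.
Hypothesis prec_constr : forall c g, isC c -> ~~ prec g c.

Lemma pt_constr_unlabeled (H G : tgraph F) : pt nn prec H G ->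
  (forall f, lab (tg G) (rootg G) = Some f -> isC f) ->
  forall v, lab (tg H) v = None.
Proof.
move=> HG G_constr v; case E: (lab (tg H) v) => [g|] //.
have below_HG : below prec H G by case: HG.
have [f [Ef gf]] := below_HG v g (lab_node E) E.
by have := prec_constr g (G_constr f Ef); rewrite gf.
Qed.

Section Rule.
Variable R : rule F.
Hypothesis R_wf : rule_wf ar R.
Hypothesis R_constr : constructor_rule isC R.
Hypothesis R_pt : pt nn prec (rhsg R) (lhsg R).

Local Notation K := (rK R).
Local Notation l := (rl R).
Local Notation r := (rr R).

Lemma K_wf : lgraph_wf ar K. Proof. by case: R_wf. Qed.
Lemma K_acyclic v : ~ tc K v v. Proof. by case: K_wf. Qed.
Lemma K_uniq : uniq (nodes K). Proof. by case: K_wf. Qed.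

Lemma VlP z : reflect (reach K l z) (z \in Vsub K l).
Proof. by apply: mem_VsubP K_wf _; case: R_wf. Qed.

Lemma VrP z : reflect (reach K r z) (z \in Vsub K r).
Proof. by apply: mem_VsubP K_wf _; case: R_wf. Qed.

Lemma l_Vl : l \in Vsub K l. Proof. exact/VlP/reach_refl. Qed.

Lemma lhs_lab z : reach K l z -> lab (tg (lhsg R)) z = lab K z.
Proof. by move/reachbP; apply: subg_lab. Qed.

Lemma lhs_att z : reach K l z -> att (tg (lhsg R)) z = att K z.
Proof. by move/reachbP; apply: subg_att. Qed.

Lemma lab_l : exists2 f, lab K l = Some f & ~~ isC f.
Proof.
case: R_constr => [[f [Ef nCf]] _]; exists f => //.
by rewrite -lhs_lab //; apply: reach_refl.
Qed.

Lemma nrmv_lhs : nrmv nn (tg (lhsg R)) (rootg (lhsg R)) = nrmv nn K l.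
Proof. by apply: nrmv_ext; [apply: lhs_lab | apply: lhs_att]; apply: reach_refl. Qed.

Lemma nrmv_l_reach v : v \in nrmv nn K l -> reach K l v.
Proof. by move/nrmv_att/reach_edge. Qed.

Definition below_nrm_l v := exists2 v', v' \in nrmv nn K l & reach K v' v.

(* The nodes below [r] either occur in the left-hand side or have all their
   normal arguments below normal arguments of [l]: this is what precedence
   termination with argument separation guarantees. *)
Definition from_lhs z :=
  z \in Vsub K l \/ forall v, v \in nrmv nn K z -> below_nrm_l v.

Lemma pt_from_lhs H : pt nn prec H (lhsg R) ->
  (forall z, reach (tg H) (rootg H) z -> lab (tg H) z = lab K z /\ att (tg H) z = att K z) ->
  forall z, reach K (rootg H) z -> from_lhs z.
Proof.
move=> HG; remember (lhsg R) as G eqn:EG.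
induction HG as [H G u _ uG Hor|H G f _ Ef Hn Hs IH]; subst G => H_K z rz;
  have [lH aH] := H_K _ (reach_refl _ _).
- have ul : u \in att K l by rewrite -lhs_att //; apply: reach_refl.
  case: Hor => [[Er _ _]|Hpt'].
    by left; apply/VlP; apply: reach_cons ul _; move: rz; rewrite Er.
  have u_constr f : lab (tg (subt (lhsg R) u)) (rootg (subt (lhsg R) u)) = Some f -> isC f.
    by move=> Ef; case: R_constr => _ /(_ u uG) /(_ u f (lab_node Ef) Ef).
  have lK : lab K (rootg H) = None by rewrite -lH (pt_constr_unlabeled Hpt').
  case: (reach_split rz) => [->|[x]]; last by rewrite (att_None K_wf lK).
  by right; rewrite /nrmv lK.
- have nrmH : forall v, v \in nrmv nn K (rootg H) -> below_nrm_l v.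
    move=> v; rewrite -(nrmv_ext lH aH) => /Hn [v' [v'n [w [wn [Er _ _]]]]].
    rewrite nrmv_lhs in v'n; exists v' => //.
    move: wn; rewrite /subt subg_nodes mem_Vsub => /andP [_ /reachbP rw].
    by rewrite /= in Er; rewrite Er; apply: (reach_subg w (nrmv_l_reach v'n)).1.
  case: (reach_split rz) => [->|[x xa rx]]; first by right.
  have EfK : lab K (rootg H) = Some f by rewrite -lH.
  case/orP: (att_nrmv_safev EfK xa) => [xn|xs].
    have [v' v'n rv] := nrmH x xn.
    by left; apply/VlP; apply: reach_trans (nrmv_l_reach v'n) (reach_trans rv rx).
  apply: (IH x _ erefl R_pt) => //; first by rewrite (safev_ext lH aH).
  move=> y ry; have rHx : reach (tg H) (rootg H) x.
    by apply: reach_edge; rewrite aH; exact: safev_att xs.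
  have ry' : reach (tg H) x y := (reach_subg y (reach_refl (tg H) x)).1 ry.
  have /reachbP xy := ry'.
  by rewrite /subt subg_lab // subg_att //; apply: H_K; apply: reach_trans rHx ry'.
Qed.

Lemma rhs_from_lhs z : reach K r z -> from_lhs z.
Proof.
apply: (pt_from_lhs R_pt) => y ry.
have /reachbP ry' := (reach_subg y (reach_refl K r)).1 ry.
by rewrite /rhsg /= subg_lab // subg_att.
Qed.

Definition new_nodes := [seq u <- Vsub K r | u \notin Vsub K l].

Lemma new_nodes_r u : u \in new_nodes -> u \in Vsub K r.
Proof. by rewrite mem_filter => /andP []. Qed.

Lemma new_nodes_notl u : u \in new_nodes -> u \notin Vsub K l.
Proof. by rewrite mem_filter => /andP []. Qed.

Lemma new_nrmv_below u : u \in new_nodes ->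
  forall v, v \in nrmv nn K u -> below_nrm_l v.
Proof.
move=> un; have /VrP/rhs_from_lhs [ul|//] := new_nodes_r un.
by have := new_nodes_notl un; rewrite ul.
Qed.

Lemma Vunion_nrm_r_sub :
  {subset Vunion K (nrmv nn K r) <= [seq y <- Vsub K r | y \in Vsub K l]}.
Proof.
move=> y; rewrite mem_undup => /flatten_mapP [v vn].
rewrite mem_Vsub => /andP [_ /reachbP vy].
have rv : reach K r v by apply: reach_edge; apply: nrmv_att vn.
rewrite mem_filter; apply/andP; split; last by apply/VrP; apply: reach_trans rv vy.
apply/VlP; case: (rhs_from_lhs (reach_refl K r)) => [/VlP lr|r_nrm].
  exact: reach_trans lr (reach_trans rv vy).
have [v' v'n v'v] := r_nrm v vn.
exact: reach_trans (nrmv_l_reach v'n) (reach_trans v'v vy).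
Qed.

Lemma size_new_nodes_rhs : size new_nodes <= size_tg (rhsg R).
Proof. by rewrite /size_tg subg_nodes size_filter count_size. Qed.

(* Condition (iv) bounds the new nodes by the left-hand side: the nodes below
   normal arguments of [r] are shared with [l]. *)
Lemma size_new_nodes_lhs :
  size_tg (rhsg R) <= size_tg (lhsg R) + size (Vunion K (nrmv nn K r)) ->
  size new_nodes <= size (Vsub K l).
Proof.
rewrite /size_tg !subg_nodes => rhs_le.
have shared : size (Vunion K (nrmv nn K r)) <= count (mem (Vsub K l)) (Vsub K r).
  by rewrite -size_filter; apply: uniq_leq_size; [exact: undup_uniq | exact: Vunion_nrm_r_sub].
rewrite -(leq_add2r (count (mem (Vsub K l)) (Vsub K r))) size_filter.
rewrite [X in X <= _]addnC count_predC; apply: leq_trans rhs_le _.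
by rewrite leq_add2l.
Qed.

Definition lab_below_nrm y :=
  (y \in Vsub K l) && has (fun v => (lab K v != None) && reachb K v y) (nrmv nn K l).

Definition lab_region := [seq y <- Vsub K l | lab_below_nrm y].

(* The set bounded by [d] in condition (iii). *)
Definition var_safe_region :=
  undup ([seq v <- nrmv nn K l | lab K v == None] ++ Vunion K (safev nn K l)).

Lemma Vsub_l_cover : {subset Vsub K l <= l :: lab_region ++ var_safe_region}.
Proof.
move=> y yl; have /VlP ly := yl; have [f Ef _] := lab_l.
case: (reach_split ly) => [->|[x xa xy]]; first exact: mem_head.
rewrite in_cons mem_cat mem_undup mem_cat; apply/orP; right.
case/orP: (att_nrmv_safev Ef xa) => [xn|xs].
  case: (eqVneq (lab K x) None) => [lx|lx].
    case: (reach_split xy) => [->|[z]]; last by rewrite (att_None K_wf lx).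
    by apply/or3P/Or32; rewrite mem_filter lx eqxx.
  apply/or3P/Or31; rewrite mem_filter /lab_below_nrm yl /= andbT.
  by apply/hasP; exists x => //; rewrite lx; apply/reachbP.
apply/or3P/Or33; rewrite mem_undup; apply/flatten_mapP; exists x => //.
by move: yl; rewrite !mem_Vsub => /andP [-> _]; apply/reachbP.
Qed.

Lemma size_Vsub_l : size (Vsub K l) <= (size lab_region + size var_safe_region).+1.
Proof.
by rewrite -size_cat; apply: uniq_leq_size (Vsub_uniq _ K_uniq) Vsub_l_cover.
Qed.

Lemma lab_below_nrm_closed x y : lab_below_nrm x -> y \in att K x -> lab_below_nrm y.
Proof.
case/andP => /VlP lx /hasP [v vn /andP [lv /reachbP vx]] yx.
apply/andP; split; first by apply/VlP; apply: reach_trans lx (reach_edge yx).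
by apply/hasP; exists v => //; rewrite lv; apply/reachbP; apply: reach_trans vx (reach_edge yx).
Qed.

Lemma lab_below_nrm_neq_l y : lab_below_nrm y -> y != l.
Proof.
case/andP => _ /hasP [v vn /andP [_ /reachbP vy]].
by apply/eqP => yl; subst y; apply: (@K_acyclic l); apply: reach_tc vy; apply: nrmv_att vn.
Qed.

Lemma lab_below_nrm_lab :
  (forall v, v \in nrmv nn K l -> lab K v != None -> closed_tg (subg K v)) ->
  forall y, lab_below_nrm y -> lab K y != None.
Proof.
move=> nrm_closed y /andP [yl /hasP [v vn /andP [lv vy]]].
have := nrm_closed v vn lv y; rewrite subg_lab //; apply.
by rewrite subg_nodes mem_Vsub vy andbT; move: yl; rewrite mem_Vsub => /andP [].
Qed.

Lemma cap_nrm_lab_below y : lab_below_nrm y ->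
  [/\ y \in nodes (tg (cap_nrm nn (lhsg R))), lab (tg (cap_nrm nn (lhsg R))) y = lab K y
    & att (tg (cap_nrm nn (lhsg R))) y = att K y].
Proof.
move=> Ly; have [f Ef _] := lab_l.
have El : lab (tg (lhsg R)) (rootg (lhsg R)) = Some f by rewrite lhs_lab //; apply: reach_refl.
have yl : y \in Vsub K l by case/andP: Ly.
have Ey : entry_of (tg (lhsg R)) y = entry_of K y by apply: subg_entry; apply/reachbP/VlP.
suff [yC Ey'] : y \in nodes (tg (cap_nrm nn (lhsg R))) /\
               entry_of (tg (cap_nrm nn (lhsg R))) y = entry_of K y.
  by rewrite /lab /att Ey'.
have [->|[e [rest [e1 ->]]]] := cap_nrm_shape El; first by rewrite Ey subg_nodes.
pose p x := has (fun v => reachb (tg (lhsg R)) v x)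
  (take (nn f) (att (tg (lhsg R)) (rootg (lhsg R)))) && (x != rootg (lhsg R)).
have py : p y.
  rewrite /p /= (lab_below_nrm_neq_l Ly) andbT.
  case/andP: Ly => _ /hasP [v vn /andP [_ /reachbP vy]].
  apply/hasP; exists v; first by move: vn; rewrite -nrmv_lhs /nrmv El.
  by apply/reachbP; apply/(reach_subg y (nrmv_l_reach vn)).
have yk : y \in nodes [seq x <- tg (lhsg R) | p x.1].
  by rewrite nodes_filter mem_filter py subg_nodes.
rewrite /nodes /= in_cons -/(nodes _) nodes_cat mem_cat -/(p _) yk orbT.
rewrite entry_of_cons e1 eq_sym (negbTE (lab_below_nrm_neq_l Ly)) entry_of_cat -/(p _) yk.
by rewrite (@entry_of_filter F p).
Qed.

Section Step.
Variables (G0 : tgraph F) (d : nat).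

Definition nrm0 := Vunion (tg G0) (nrmv nn (tg G0) (rootg G0)).

Hypothesis nrm0_constr : forall y f, y \in nrm0 -> lab (tg G0) y = Some f -> isC f.
Hypothesis ar_le_d : forall f, ar f <= d.

Definition frozen M z := forall y, reach M z y ->
  [/\ y \in nrm0, lab M y = lab (tg G0) y & att M y = att (tg G0) y].

Definition inv_graph M :=
  [/\ uniq (nodes M), (forall x, x \in nodes M -> {subset att M x <= nodes M}),
      (forall w v, w \in nodes M -> v \in nrmv nn M w -> frozen M v) &
      (forall x, size (att M x) <= d)].

Lemma frozen_reach M a b : frozen M a -> reach M a b -> frozen M b.
Proof. by move=> fa ab y rb; apply: fa; apply: reach_trans ab rb. Qed.

Variables (T : tgraph F) (phi c : nat -> nat).
Hypothesis T_inv : inv_graph (tg T).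
Hypothesis phi_hom : homo K l (tg T) phi.
Hypothesis c_fresh_ok : fresh_ok R T c.

Local Notation M := (tg T).

Lemma phi_node u : u \in Vsub K l -> phi u \in nodes M.
Proof. by case/phi_hom. Qed.

Lemma phi_lab u f : u \in Vsub K l -> lab K u = Some f ->
  lab M (phi u) = Some f /\ att M (phi u) = map phi (att K u).
Proof. by move=> ul; case: (phi_hom ul) => _; apply. Qed.

(* Frozen nodes carry constructors, so the redex root [phi l] is never one. *)
Lemma frozen_neq_phi_l y : y \in nrm0 -> lab M y = lab (tg G0) y -> y != phi l.
Proof.
move=> y0 ly; apply/eqP => yl; have [f Ef nCf] := lab_l.
have [lf _] := phi_lab l_Vl Ef.
by move: y0 ly; rewrite yl lf => y0 /esym /(nrm0_constr y0); rewrite (negbTE nCf).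
Qed.

Lemma phi_reach a b : a \in Vsub K l -> reach K a b -> reach M (phi a) (phi b).
Proof.
move=> al ab; suff [] : b \in Vsub K l /\ reach M (phi a) (phi b) by [].
move: b ab; apply: reach_ind; first by split => //; apply: reach_refl.
move=> x y _ [xl ax] yx; split.
  by apply/VlP; apply: reach_trans (elimT (VlP x) xl) (reach_edge yx).
case E: (lab K x) => [g|]; last by rewrite (att_None K_wf E) in yx.
have [_ ax'] := phi_lab xl E.
by apply: reach_trans ax (reach_edge _); rewrite ax' map_f.
Qed.

Lemma nrmv_phi_l : nrmv nn M (phi l) = map phi (nrmv nn K l).
Proof.
have [f Ef _] := lab_l; have [lf af] := phi_lab l_Vl Ef.
by rewrite /nrmv lf Ef af map_take.
Qed.

Lemma frozen_phi v : below_nrm_l v -> frozen M (phi v).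
Proof.
case=> v' v'n v'v; have [_ _ T_nrm _] := T_inv.
have v'n' : phi v' \in nrmv nn M (phi l) by rewrite nrmv_phi_l map_f.
apply: frozen_reach (T_nrm _ _ (phi_node l_Vl) v'n') _.
by apply: phi_reach v'v; apply/VlP/nrmv_l_reach.
Qed.

Definition img u := if u \in Vsub K l then phi u else c u.
Definition new_entries := [seq (c u, (lab K u, map img (att K u))) | u <- new_nodes].
Definition built := M ++ new_entries.
Definition redir w := if w == phi l then img r else w.
Definition redirected := [seq (e.1, (e.2.1, map redir e.2.2)) | e <- built].
Definition new_root := redir (rootg T).

Lemma step_resultE : step_result R T phi c = subg redirected new_root.
Proof. by []. Qed.

Local Notation res := (tg (subg redirected new_root)).

Lemma c_inj : {in new_nodes &, injective c}. Proof. by case: c_fresh_ok. Qed.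

Lemma c_fresh u : u \in new_nodes -> c u \notin nodes M.
Proof. by case: c_fresh_ok => _; apply. Qed.

Lemma nodes_built : nodes built = nodes M ++ map c new_nodes.
Proof. by rewrite nodes_cat /nodes /new_entries -map_comp. Qed.

Lemma nodes_redirected : nodes redirected = nodes built.
Proof. exact: nodes_map. Qed.

Lemma entry_new_entries u : u \in new_nodes ->
  entry_of new_entries (c u) = (c u, (lab K u, map img (att K u))).
Proof.
move: c_inj; rewrite /new_entries; elim: new_nodes u => [|x s IH] u //= s_inj us.
rewrite entry_of_cons /=; case: eqP => [cx|ncx]; first by rewrite (s_inj x u) // ?mem_head.
apply: IH; first by move=> a b ai bi; apply: s_inj; rewrite in_cons ?ai ?bi orbT.
by move: us; rewrite in_cons => /orP [/eqP ux|//]; case: ncx; rewrite ux.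
Qed.

Lemma entry_built_old x : x \in nodes M -> entry_of built x = entry_of M x.
Proof. by move=> xM; rewrite /built entry_of_cat xM. Qed.

Lemma entry_built_new u : u \in new_nodes ->
  entry_of built (c u) = (c u, (lab K u, map img (att K u))).
Proof. by move=> un; rewrite /built entry_of_cat (negbTE (c_fresh un)) entry_new_entries. Qed.

Lemma lab_redirected x : lab redirected x = lab built x.
Proof.
case: (boolP (x \in nodes built)) => xB; last by rewrite !lab_notin ?nodes_redirected.
by rewrite /lab /redirected entry_of_map.
Qed.

Lemma att_redirected x : att redirected x = map redir (att built x).
Proof.
case: (boolP (x \in nodes built)) => xB; last by rewrite !att_notin ?nodes_redirected.
by rewrite /att /redirected entry_of_map.
Qed.

Lemma nodes_builtP x : x \in nodes built ->
  x \in nodes M \/ exists2 u, u \in new_nodes & x = c u.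
Proof.
by rewrite nodes_built mem_cat => /orP [|/mapP [u ? ?]]; [left | right; exists u].
Qed.

Lemma img_node u : u \in Vsub K r -> img u \in nodes built.
Proof.
move=> ur; rewrite /img nodes_built mem_cat; case: ifP => ul; first by rewrite phi_node.
by rewrite map_f ?orbT // mem_filter ul.
Qed.

Lemma att_built_node x y : y \in att built x -> y \in nodes built.
Proof.
move=> yx; have [_ M_closed _ _] := T_inv.
case: (nodes_builtP (att_node yx)) => [xM|[u un xu]].
  by move: yx; rewrite /att entry_built_old // nodes_built mem_cat => /(M_closed _ xM) ->.
move: yx; rewrite xu /att entry_built_new //= => /mapP [u' u'u ->].
apply/img_node/VrP; apply: reach_trans (elimT (VrP u) (new_nodes_r un)) (reach_edge u'u).
Qed.

Lemma att_redirected_node x y : y \in att redirected x -> y \in nodes redirected.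
Proof.
rewrite att_redirected nodes_redirected => /mapP [y0 /att_built_node y0B ->].
by rewrite /redir; case: ifP => // _; apply/img_node/VrP/reach_refl.
Qed.

Lemma redirected_uniq : uniq (nodes redirected).
Proof.
have [M_uniq _ _ _] := T_inv.
rewrite nodes_redirected nodes_built cat_uniq M_uniq /=; apply/andP; split.
  by apply/hasP => [[x /mapP [u un ->]]]; rewrite (negbTE (c_fresh un)).
by rewrite map_inj_in_uniq ?filter_uniq ?Vsub_uniq ?K_uniq //; exact: c_inj.
Qed.

Lemma redirected_arity x : size (att redirected x) <= d.
Proof.
have [_ _ _ M_ar] := T_inv; rewrite att_redirected size_map.
case: (boolP (x \in nodes built)) => xB; last by rewrite att_notin.
case/nodes_builtP: xB => [xM|[u un ->]].
  by rewrite /att entry_built_old // -/(att _ _).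
rewrite /att entry_built_new //= size_map.
have [_ _ K_ar _] := K_wf; rewrite K_ar; first by case: (lab K u).
by have := new_nodes_r un; rewrite mem_Vsub => /andP [].
Qed.

Lemma mem_res x : (x \in nodes res) = (x \in nodes redirected) && reachb redirected new_root x.
Proof. by rewrite subg_nodes mem_Vsub. Qed.

Lemma lab_res x : x \in nodes res -> lab res x = lab built x.
Proof. by rewrite mem_res => /andP [_ ?]; rewrite subg_lab // lab_redirected. Qed.

Lemma att_res x : x \in nodes res -> att res x = map redir (att built x).
Proof. by rewrite mem_res => /andP [_ ?]; rewrite subg_att // att_redirected. Qed.

Lemma res_closed x : x \in nodes res -> {subset att res x <= nodes res}.
Proof.
rewrite mem_res => /andP [xB /reachbP rx] y; rewrite subg_att; last exact/reachbP.
move=> yx; rewrite mem_res (att_redirected_node yx); apply/reachbP.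
exact: reach_trans rx (reach_edge yx).
Qed.

Lemma res_arity x : size (att res x) <= d.
Proof.
case: (boolP (x \in nodes res)) => xS; last by rewrite att_notin.
by move: xS; rewrite mem_res => /andP [_ ?]; rewrite subg_att ?redirected_arity.
Qed.

Lemma frozen_redir z y : frozen M z -> reach M z y -> map redir (att M y) = att M y.
Proof.
move=> fz zy; apply: map_id_in => y' y'y; rewrite /redir.
have [y'0 ly' _] := fz y' (reach_trans zy (reach_edge y'y)).
by rewrite (negbTE (frozen_neq_phi_l y'0 ly')).
Qed.

(* A frozen region of [M] is untouched by the step: it contains no redex root,
   hence no redirected edge. *)
Lemma frozen_res z : z \in nodes M -> z \in nodes res -> frozen M z -> frozen res z.
Proof.
move=> zM zS fz; have [_ M_closed _ _] := T_inv.
have below_z : forall y, reach res z y -> [/\ reach M z y, y \in nodes M & y \in nodes res].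
  apply: reach_ind; first by split => //; apply: reach_refl.
  move=> x y _ [zx xM xS] yx; have yS := res_closed xS yx.
  move: yx; rewrite att_res // /att entry_built_old // -/(att _ _) (frozen_redir fz zx) => yx.
  by split => //; [apply: reach_trans zx (reach_edge yx) | apply: M_closed xM _ yx].
move=> y /below_z [zy yM yS]; have [y0 ly ay] := fz y zy.
rewrite lab_res // att_res // /lab /att entry_built_old // -/(att _ _) -/(lab _ _).
by rewrite (frozen_redir fz zy).
Qed.

Lemma nrmv_res w : w \in nodes res -> nrmv nn res w = map redir (nrmv nn built w).
Proof.
move=> wS; rewrite /nrmv lab_res // att_res //.
by case: (lab built w) => // f; rewrite map_take.
Qed.

Lemma res_nrm_frozen w v : w \in nodes res -> v \in nrmv nn res w ->
  v \in nodes M /\ frozen M v.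
Proof.
move=> wS; rewrite nrmv_res // => /mapP [v0 v0n ->]; have [_ M_closed M_nrm _] := T_inv.
have wB : w \in nodes built by move: wS; rewrite mem_res nodes_redirected => /andP [].
suff [v0M fv0] : v0 \in nodes M /\ frozen M v0.
  have [v00 lv0 _] := fv0 v0 (reach_refl _ _).
  by rewrite /redir (negbTE (frozen_neq_phi_l v00 lv0)).
move: v0n; case: (nodes_builtP wB) => [wM|[u un ->]].
  move=> v0n; have v0n' : v0 \in nrmv nn M w by rewrite /nrmv /lab /att -entry_built_old.
  by split; [apply: M_closed wM _ (nrmv_att v0n') | apply: M_nrm v0n'].
rewrite /nrmv /lab /att entry_built_new //=.
case E: (lab K u) => [g|] //; rewrite -map_take => /mapP [v' v'n ->].
have /(new_nrmv_below un) v'l : v' \in nrmv nn K u by rewrite /nrmv E.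
have [v'' v''n v''v] := v'l.
have v'L : v' \in Vsub K l by apply/VlP; apply: reach_trans (nrmv_l_reach v''n) v''v.
by rewrite /img v'L; split; [exact: phi_node | exact: frozen_phi].
Qed.

Lemma res_uniq : uniq (nodes res).
Proof. by rewrite subg_nodes; apply: Vsub_uniq redirected_uniq. Qed.

Lemma res_inv : inv_graph res.
Proof.
split; [exact: res_uniq | exact: res_closed | | exact: res_arity].
move=> w v wS vn; have [vM fv] := res_nrm_frozen wS vn.
by apply: frozen_res => //; apply: res_closed wS _ (nrmv_att vn).
Qed.

Lemma size_res : size (nodes res) <= size (nodes M) + size new_nodes.
Proof.
rewrite subg_nodes /Vsub size_filter; apply: leq_trans (count_size _ _) _.
by rewrite nodes_redirected nodes_built size_cat size_map.
Qed.

(* With [d = 0] every node is a leaf, so the result consists of its root only. *)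
Lemma size_res_d0 : d = 0 -> size (nodes res) <= size (nodes M).
Proof.
move=> d0; have : size (nodes res) <= size [:: new_root].
  apply: uniq_leq_size res_uniq _ => y.
  rewrite mem_res => /andP [_ /reachbP /reach_split [->|[x]]]; first exact: mem_head.
  by have := redirected_arity new_root; rewrite d0 leqn0 size_eq0 => /eqP ->.
by move/leq_trans; apply; case: (nodes M) (phi_node l_Vl).
Qed.

Lemma size_new_nodes_inf :
  max_shared (cap_nrm nn (lhsg R)) ->
  (forall v, v \in nrmv nn K l -> lab K v != None -> closed_tg (subg K v)) ->
  size var_safe_region <= d ->
  size_tg (rhsg R) <= size_tg (lhsg R) + size (Vunion K (nrmv nn K r)) ->
  size new_nodes <= (size nrm0 + d).+1.
Proof.
move=> lhs_ms nrm_closed var_safe_d rhs_le.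
apply: leq_trans (size_new_nodes_lhs rhs_le) _; apply: leq_trans size_Vsub_l _.
rewrite ltnS leq_add //.
have Lab_lab := lab_below_nrm_lab nrm_closed.
have phi_hom_Lab z : lab_below_nrm z ->
    lab M (phi z) = lab K z /\ att M (phi z) = map phi (att K z).
  move=> Lz; case E: (lab K z) (Lab_lab z Lz) => [f|] // _.
  by have [-> ->] := phi_lab (proj1 (andP Lz)) E.
have phi_inj := max_shared_inj Lab_lab phi_hom_Lab K_acyclic lab_below_nrm_closed
  cap_nrm_lab_below lhs_ms.
rewrite -(size_map phi lab_region); apply: uniq_leq_size.
  rewrite (map_inj_in_uniq (f := phi)); first exact/filter_uniq/Vsub_uniq/K_uniq.
  by move=> a b; rewrite !mem_filter => /andP [La _] /andP [Lb _]; apply: phi_inj.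
move=> z /mapP [y]; rewrite mem_filter => /andP [/andP [yl Ly] _] ->.
case/hasP: Ly => v vn /andP [_ /reachbP vy].
by case: (frozen_phi (ex_intro2 _ _ v vn vy) (reach_refl _ _)).
Qed.

End Step.
End Rule.
End Rules.

Section Reduction.
Variables (F : finType) (ar : F -> nat) (isC : pred F) (nn : F -> nat).
Hypothesis nn_constr : forall f, isC f -> nn f = 0.
Variables (S : GRS F) (prec : rel F) (d : nat) (G0 : tgraph F).
Hypothesis prec_constr : forall c g, isC c -> ~~ prec g c.
Hypothesis S_wf : forall R, S R -> rule_wf ar R.
Hypothesis S_constr : forall R, S R -> constructor_rule isC R.
Hypothesis S_pt : forall R, S R -> pt nn prec (rhsg R) (lhsg R).
Hypothesis ar_le_d : forall f, ar f <= d.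
Hypothesis fin_rhs_le_d : forall R, S R -> ~ in_Ginf S R -> size_tg (rhsg R) <= d.
Hypothesis inf_max_shared : forall R, S R -> in_Ginf S R -> max_shared (cap_nrm nn (lhsg R)).
Hypothesis inf_nrm_closed : forall R, S R -> in_Ginf S R ->
  forall v, v \in nrmv nn (rK R) (rl R) -> lab (rK R) v != None -> closed_tg (subg (rK R) v).
Hypothesis inf_var_safe_le_d : forall R, S R -> in_Ginf S R -> size (var_safe_region nn R) <= d.
Hypothesis inf_rhs_le : forall R, S R -> in_Ginf S R ->
  size_tg (rhsg R) <= size_tg (lhsg R) + size (Vunion (rK R) (nrmv nn (rK R) (rr R))).
Hypothesis G0_basic : basic isC G0.

Lemma inv_graph_tg_eq (H T : tgraph F) :
  tg_eq H T -> inv_graph nn G0 d (tg T) -> inv_graph nn G0 d (tg H).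
Proof.
move=> HT; have [eq_nodes eq_lab eq_att] := tg_eq_fun HT; case: HT => _ P _.
case=> T_uniq T_closed T_nrm T_ar; split.
- by rewrite (perm_uniq P).
- by move=> x; rewrite eq_nodes eq_att => /T_closed + y; rewrite eq_nodes; apply.
- move=> w v; rewrite eq_nodes (nrmv_ext nn (eq_lab w) (eq_att w)) => wT vn y.
  by move/(reach_eq_att eq_att); case/(T_nrm w v wT vn) => y0 ly ay; rewrite eq_lab eq_att.
- by move=> x; rewrite eq_att.
Qed.

Lemma nrm0_constr y f : y \in nrm0 nn G0 -> lab (tg G0) y = Some f -> isC f.
Proof.
case: G0_basic => _ G0_basic'; rewrite mem_undup => /flatten_mapP [v vn yv] lyf.
have := G0_basic' v (nrmv_att vn) y f; rewrite /subt subg_nodes; apply => //.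
by rewrite subg_lab //; move: yv; rewrite mem_Vsub => /andP [].
Qed.

(* In a basic term graph only the root has normal arguments, since
   constructors have none. *)
Lemma inv_graph_basic : is_tg ar G0 -> inv_graph nn G0 d (tg G0).
Proof.
case: G0_basic => _ G0_basic' [G0_wf G0_root G0_reach].
have [G0_uniq G0_closed G0_ar _] := G0_wf; split => //.
- move=> w v wG0 vn y ry; split => //.
  have w_root : w = rootg G0.
    case: (reach_split (elimT (reachbP _ _ _) (G0_reach w wG0))) => [//|[x xa xw]].
    move: vn; rewrite /nrmv; case E: (lab (tg G0) w) => [g|] //.
    have := G0_basic' x xa w g; rewrite /subt subg_nodes mem_Vsub wG0 subg_lab; last exact/reachbP.
    by move=> /(_ (introT (reachbP _ _ _) xw) E) /nn_constr ->; rewrite take0.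
  subst w; rewrite mem_undup; apply/flatten_mapP; exists v => //.
  exact/(mem_VsubP _ G0_wf (G0_closed _ G0_root _ (nrmv_att vn))).
- move=> x; case: (boolP (x \in nodes (tg G0))) => xG0; last by rewrite att_notin.
  by rewrite G0_ar //; case: (lab _ x).
Qed.

Lemma step_inv_size T T' : inv_graph nn G0 d (tg T) -> step S T T' ->
  inv_graph nn G0 d (tg T') /\ size_tg T' <= size_tg T + (size (nrm0 nn G0) + 2 * d).
Proof.
move=> T_inv [R [phi [c [SR hom fr]]]]; rewrite step_resultE => eqT'.
split.
  apply: inv_graph_tg_eq eqT' _.
  exact: (res_inv prec_constr (S_wf SR) (S_constr SR) (S_pt SR) nrm0_constr
    ar_le_d T_inv hom fr).
have -> : size_tg T' = size (nodes (tg (subg (redirected R T phi c) (new_root R T phi c)))).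
  by case: eqT' => _ /perm_size.
case: (eqVneq d 0) => [d0|d_gt0].
  exact: leq_trans (size_res_d0 (S_wf SR) ar_le_d T_inv hom fr d0) (leq_addr _ _).
apply: leq_trans (size_res R T phi c) (leq_add (leqnn _) _).
case: (classic (in_Ginf S R)) => Rinf.
  apply: leq_trans (size_new_nodes_inf prec_constr (S_wf SR) (S_constr SR) (S_pt SR) T_inv hom
    (inf_max_shared SR Rinf) (inf_nrm_closed SR Rinf) (inf_var_safe_le_d SR Rinf)
    (inf_rhs_le SR Rinf)) _.
  by rewrite ltn_add2l mul2n -addnn -{1}[d]addn0 ltn_add2l lt0n.
apply: leq_trans (size_new_nodes_rhs R) (leq_trans (fin_rhs_le_d SR Rinf) _).
by rewrite addnCA leq_addr.
Qed.

Lemma steps_size n T T' : inv_graph nn G0 d (tg T) -> steps S n T T' ->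
  size_tg T' <= size_tg T + n * (size (nrm0 nn G0) + 2 * d).
Proof.
elim: n T => [|n IH] T T_inv /=; first by move=> ->; rewrite addn0.
case=> T1 [/(step_inv_size T_inv) [T1_inv T1_size] /(IH _ T1_inv)].
by move/leq_trans; apply; rewrite [n.+1 * _]mulSn addnA leq_add2r.
Qed.

End Reduction.

Theorem mainTheorem6
  (F : finType) (ar : F -> nat) (isC : pred F) (nn : F -> nat)
  (Hnn : forall f, nn f <= ar f) (HnnC : forall f, isC f -> nn f = 0)
  (S : GRS F)
  (Hwf : forall R, S R -> rule_wf ar R)
  (Hconstr : forall R, S R -> constructor_rule isC R)
  (Hpt : exists prec : rel F, precedence isC prec /\
           forall R, S R -> pt nn prec (rhsg R) (lhsg R))
  (d : nat)
  (Hd_ar : forall f, ar f <= d)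
  (Hd_fin : forall R, S R -> ~ in_Ginf S R -> size_tg (rhsg R) <= d)
  (Hi : forall R, S R -> in_Ginf S R -> max_shared (cap_nrm nn (lhsg R)))
  (Hii : forall R, S R -> in_Ginf S R ->
     forall v, v \in nrmv nn (rK R) (rl R) -> lab (rK R) v != None ->
       closed_tg (subg (rK R) v))
  (Hiii : forall R, S R -> in_Ginf S R ->
     size (undup ([seq v <- nrmv nn (rK R) (rl R) | lab (rK R) v == None]
                  ++ Vunion (rK R) (safev nn (rK R) (rl R)))) <= d)
  (Hiv : forall R, S R -> in_Ginf S R ->
     size_tg (rhsg R) <= size_tg (lhsg R) + size (Vunion (rK R) (nrmv nn (rK R) (rr R))))
  (G0 : tgraph F) (HG0 : is_tg ar G0) (HG0c : closed_tg G0) (HG0b : basic isC G0)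
  (n : nat) (G : tgraph F) :
  steps S n G0 G ->
  size_tg G <= size_tg G0 + n * (size (Vunion (tg G0) (nrmv nn (tg G0) (rootg G0))) + 2 * d).
Proof.
have [prec [[_ _ _ prec_constr] S_pt]] := Hpt.
apply: (steps_size prec_constr Hwf Hconstr S_pt Hd_ar Hd_fin Hi Hii Hiii Hiv HG0b).
exact: (inv_graph_basic HnnC Hd_ar HG0b HG0).
Qed.
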